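(* Let $R$ be a bounded principal ideal domain. Then a nonzero non-unit $a\in R$ is c-irreducible if and only if it is irreducible. Equivalently, a nonzero left ideal of $R$ is completely prime if and only if it is a maximal left ideal.
   Context: A principal ideal domain (PID) is a (not necessarily commutative) domain in which every left ideal and every right ideal is principal. An element $p$ is bounded if $Rp$ contains a nonzero two-sided ideal; the PID $R$ is bounded if every nonzero non-unit of $R$ is bounded. A non-unit $a$ is irreducible if $a=bc$ implies $b$ or $c$ is a unit. Elements $b,c$ are similar if $R/Rb\cong R/Rc$ as left $R$-modules. A nonzero $a$ is c-reducible if $a=bb'=c'c$ for some non-units $b,b',c',c$ with $b$ similar to $c$; otherwise c-irreducible. A left ideal $\mathfrak{p}$ is completely prime if $\mathfrak{p}\neq R$ and $ab\in\mathfrak{p}$, $\mathfrak{p}b\subseteq\mathfrak{p}$ imply $a\in\mathfrak{p}$ or $b\in\mathfrak{p}$. *)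

From mathcomp Require Import all_boot all_algebra.
Set Implicit Arguments. Unset Strict Implicit. Unset Printing Implicit Defensive.
Import GRing.Theory.
Local Open Scope ring_scope.

Section Defs.
Variable R : unitRingType.

Definition is_left_ideal (I : R -> Prop) : Prop :=
  [/\ I 0, (forall x y, I x -> I y -> I (x + y)) & (forall r x, I x -> I (r * x))].

Definition is_right_ideal (I : R -> Prop) : Prop :=
  [/\ I 0, (forall x y, I x -> I y -> I (x + y)) & (forall r x, I x -> I (x * r))].

Definition is_twosided_ideal (I : R -> Prop) : Prop :=
  is_left_ideal I /\ is_right_ideal I.

Definition lprinc (a : R) : R -> Prop := fun x => exists r, x = r * a.
Definition rprinc (a : R) : R -> Prop := fun x => exists r, x = a * r.

Definition is_domain : Prop := forall a b : R, a * b = 0 -> a = 0 \/ b = 0.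

Definition is_PID : Prop :=
  [/\ is_domain,
      (forall I, is_left_ideal I -> exists a, forall x, I x <-> lprinc a x) &
      (forall I, is_right_ideal I -> exists a, forall x, I x <-> rprinc a x)].

Definition bounded_elt (p : R) : Prop :=
  exists I, [/\ is_twosided_ideal I, (exists x, I x /\ x <> 0)
              & (forall x, I x -> lprinc p x)].

Definition bounded_ring : Prop :=
  forall p : R, p <> 0 -> p \isn't a GRing.unit -> bounded_elt p.

Definition irreducible_elt (a : R) : Prop :=
  a \isn't a GRing.unit /\
  forall b c, a = b * c -> b \is a GRing.unit \/ c \is a GRing.unit.

(* R/Rb ~= R/Rc as left R-modules, written out on representatives:
   phi : R -> R induces a well-defined, R-linear, bijective map R/Rb -> R/Rc. *)
Definition similar (b c : R) : Prop :=
  exists phi : R -> R,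
    [/\ (forall x y, lprinc b (x - y) -> lprinc c (phi x - phi y)),
        (forall x y, lprinc c (phi (x + y) - (phi x + phi y))),
        (forall r x, lprinc c (phi (r * x) - r * phi x)),
        (forall x y, lprinc c (phi x - phi y) -> lprinc b (x - y)) &
        (forall y, exists x, lprinc c (y - phi x))].

Definition c_reducible (a : R) : Prop :=
  a <> 0 /\
  exists b b' c' c,
    [/\ [/\ b \isn't a GRing.unit, b' \isn't a GRing.unit,
            c' \isn't a GRing.unit & c \isn't a GRing.unit],
        a = b * b', a = c' * c & similar b c].

Definition c_irreducible (a : R) : Prop := ~ c_reducible a.

Definition completely_prime (P : R -> Prop) : Prop :=
  (exists x, ~ P x) /\
  forall a b, P (a * b) -> (forall x, P x -> P (x * b)) -> P a \/ P b.

Definition maximal_left_ideal (P : R -> Prop) : Prop :=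
  [/\ is_left_ideal P, (exists x, ~ P x) &
      forall J, is_left_ideal J -> (forall x, P x -> J x) ->
        (forall x, J x <-> P x) \/ (forall x, J x)].

End Defs.

(* Let a = b c with b, c non-units and let rho generate the bound of R b; being a
   two-sided ideal of a PID, it is R rho = rho R.  One finds x, y outside R a with
   x y and a y in R a.  If R rho + R c = R, write 1 = rho^N u + z c, where N is where
   the chain of left ideals {r | rho^n r \in R a} becomes stationary, and take
   x = rho^N, y = z c.  Otherwise R rho + R c = R q is proper and rho = q k'; then k'
   is not in the bound (else q would be a unit), and x = q, y = k' u c work for any u
   with k' u outside R b.  Such a pair shows at once that R a is not completely prime
   and that a is c-reducible.  Maximal left ideals are completely prime in any ring. *)

From mathcomp Require Import all_boot all_algebra.
From Stdlib Require Import Classical.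
From Stdlib Require Import FunctionalExtensionality PropExtensionality.
Import GRing.Theory.
Local Open Scope ring_scope.
Set Implicit Arguments. Unset Strict Implicit.

Section PrincipalIdeals.
Variables (R : unitRingType) (a : R).

Lemma lprinc_left_ideal : is_left_ideal (lprinc a).
Proof.
split=> [|x y [r ->] [s ->]|r x [s ->]]; first by exists 0; rewrite mul0r.
- by exists (r + s); rewrite mulrDl.
- by exists (r * s); rewrite mulrA.
Qed.

Lemma lprinc0 : lprinc a 0.
Proof. by case: lprinc_left_ideal. Qed.

Lemma lprincD x y : lprinc a x -> lprinc a y -> lprinc a (x + y).
Proof. by case: lprinc_left_ideal => _ addP _; apply: addP. Qed.

Lemma lprincMl r x : lprinc a x -> lprinc a (r * x).
Proof. by case: lprinc_left_ideal => _ _ mulP; apply: mulP. Qed.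

Lemma lprincB x y : lprinc a x -> lprinc a y -> lprinc a (x - y).
Proof. by move=> ax ay; apply: lprincD ax _; rewrite -mulN1r; apply: lprincMl. Qed.

Lemma lprinc_mul x : lprinc a (x * a).
Proof. by exists x. Qed.

Lemma lprinc_id : lprinc a a.
Proof. by exists 1; rewrite mul1r. Qed.

Lemma rprinc_mul x : rprinc a (a * x).
Proof. by exists x. Qed.

Lemma rprinc_id : rprinc a a.
Proof. by exists 1; rewrite mulr1. Qed.

Lemma lprinc_unit x : a \is a GRing.unit -> lprinc a x.
Proof. by move=> /unitrP [e [ea1 _]]; exists (x * e); rewrite -mulrA ea1 mulr1. Qed.

End PrincipalIdeals.

Lemma lprinc_unit_factor (R : unitRingType) (a u d x : R) :
  a = u * d -> u \is a GRing.unit -> lprinc d x -> lprinc a x.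
Proof.
move=> eq_a /unitrP [v [vu1 _]] [e ->]; exists (e * v).
by rewrite eq_a mulrA -(mulrA e) vu1 mulr1.
Qed.

Definition left_principal (R : unitRingType) : Prop :=
  forall I : R -> Prop, is_left_ideal I -> exists a, forall x, I x <-> lprinc a x.

Lemma PID_left_principal (R : unitRingType) : is_PID R -> left_principal R.
Proof. by case. Qed.

Section Domain.
Variable R : unitRingType.
Hypothesis domR : is_domain R.

Lemma domain_mulIf (c x y : R) : c <> 0 -> x * c = y * c -> x = y.
Proof.
move=> c_neq0 eq_xy; have : (x - y) * c = 0 by rewrite mulrBl eq_xy subrr.
by case/domR => // /eqP; rewrite subr_eq0 => /eqP.
Qed.

Lemma domain_mulfI (c x y : R) : c <> 0 -> c * x = c * y -> x = y.
Proof.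
move=> c_neq0 eq_xy; have : c * (x - y) = 0 by rewrite mulrBr eq_xy subrr.
by case/domR => // /eqP; rewrite subr_eq0 => /eqP.
Qed.

Lemma domain_mulr1C (x y : R) : x * y = 1 -> y * x = 1.
Proof.
move=> xy1; have : (y * x - 1) * y = 0 by rewrite mulrBl -mulrA xy1 mulr1 mul1r subrr.
case/domR => [/eqP|y0]; first by rewrite subr_eq0 => /eqP.
by move: xy1; rewrite y0 mulr0 => /esym/eqP; rewrite oner_eq0.
Qed.

Lemma domain_linv_unit (m b : R) : m * b = 1 -> b \is a GRing.unit.
Proof. by move=> mb1; apply/unitrP; exists m; split=> //; apply: domain_mulr1C. Qed.

Lemma lprinc_1_unit (d : R) : lprinc d 1 -> d \is a GRing.unit.
Proof. by move=> [e ed1]; apply: (domain_linv_unit (esym ed1)). Qed.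

Lemma right_factor_notin_lprinc (a b c : R) :
  a = b * c -> b \isn't a GRing.unit -> c <> 0 -> ~ lprinc a c.
Proof.
move=> eq_abc /negP b_nonunit c_neq0 [m eq_c]; apply: b_nonunit.
apply: (@domain_linv_unit m); apply: (domain_mulIf c_neq0).
by rewrite mul1r -mulrA -eq_abc -eq_c.
Qed.

End Domain.

Section Invariant.
Variable R : unitRingType.

Definition invariant (rho : R) : Prop := forall r, lprinc rho r <-> rprinc rho r.

Lemma invariantX (rho : R) n : invariant rho -> invariant (rho ^+ n).
Proof.
move=> rho_inv; elim: n => [|n IHn] r.
  by rewrite expr0; split=> _; exists r; rewrite ?mul1r ?mulr1.
split=> [[s ->]|[s ->]].
- have [t eq_t] := (IHn (s * rho ^+ n)).1 (lprinc_mul _ s).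
  have [t' eq_t'] := (rho_inv (t * rho)).1 (lprinc_mul _ t).
  by exists t'; rewrite exprSr mulrA eq_t -mulrA eq_t' mulrA.
- have [t eq_t] := (IHn (rho ^+ n * s)).2 (rprinc_mul _ s).
  have [t' eq_t'] := (rho_inv (rho * t)).2 (rprinc_mul _ t).
  by exists t'; rewrite exprS -mulrA eq_t mulrA eq_t' -mulrA.
Qed.

Lemma twosided_ideal_invariant_generator (I : R -> Prop) :
  is_PID R -> is_twosided_ideal I -> (exists x, I x /\ x <> 0) ->
  exists rho, [/\ rho <> 0, forall x, I x <-> lprinc rho x & forall x, I x <-> rprinc rho x].
Proof.
move=> [domR lprincR rprincR] [I_left I_right] [x0 [Ix0 x0_neq0]].
have [rho I_rho] := lprincR I I_left; have [pi I_pi] := rprincR I I_right.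
have pi_neq0 : pi <> 0.
  by move=> pi0; apply: x0_neq0; have [r ->] := (I_pi x0).1 Ix0; rewrite pi0 mul0r.
have [v eq_rho] := (I_pi rho).1 ((I_rho rho).2 (lprinc_id rho)).
have [u eq_pi] := (I_rho pi).1 ((I_pi pi).2 (rprinc_id pi)).
case: I_left I_right => _ _ I_mull [_ _ I_mulr].
have [w eq_upi] := (I_pi (u * pi)).1 (I_mull u pi ((I_pi pi).2 (rprinc_id pi))).
have wv1 : w * v = 1.
  by apply: (domain_mulfI domR pi_neq0); rewrite mulr1 mulrA -eq_upi -mulrA -eq_rho -eq_pi.
exists rho; split=> [rho0|//|x].
  by apply: pi_neq0; rewrite eq_pi rho0 mulr0.
split=> [/I_pi [t ->]|[t ->]]; last by apply: I_mulr; apply/I_rho/lprinc_id.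
by exists (w * t); rewrite eq_rho -mulrA (mulrA v) (domain_mulr1C domR wv1) mul1r.
Qed.

End Invariant.

(* The bound of R b: the largest two-sided ideal contained in R b. *)
Definition lbound (R : unitRingType) (b : R) : R -> Prop := fun r => forall u, lprinc b (r * u).

Section Bound.
Variables (R : unitRingType) (b : R).

Lemma lbound_lprinc r : lbound b r -> lprinc b r.
Proof. by move=> /(_ 1); rewrite mulr1. Qed.

Lemma lbound0 : lbound b 0.
Proof. by move=> u; rewrite mul0r; apply: lprinc0. Qed.

Lemma lboundMl s r : lbound b r -> lbound b (s * r).
Proof. by move=> br u; rewrite -mulrA; apply: lprincMl. Qed.

Lemma lbound_twosided : is_twosided_ideal (lbound b).
Proof.
have lbound_add x y : lbound b x -> lbound b y -> lbound b (x + y).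
  by move=> bx by_ u; rewrite mulrDl; apply: lprincD.
split; split=> //; [exact: lbound0 | exact: lboundMl | exact: lbound0 |].
by move=> r x bx u; rewrite -mulrA.
Qed.

Lemma lbound_invariant_generator : is_PID R -> bounded_elt b ->
  exists rho, [/\ rho <> 0, invariant rho & forall r, lbound b r <-> rprinc rho r].
Proof.
move=> PID_R [I [[_ [_ _ I_mulr]] [x [Ix x_neq0]] I_sub]].
have b_x : lbound b x by move=> u; apply: I_sub; apply: I_mulr.
have [rho [rho_neq0 b_rho_l b_rho_r]] :=
  twosided_ideal_invariant_generator PID_R lbound_twosided (ex_intro _ x (conj b_x x_neq0)).
exists rho; split=> // r; exact: iff_trans (iff_sym (b_rho_l r)) (b_rho_r r).
Qed.

End Bound.

Section LeftPrincipalRing.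
Variable R : unitRingType.
Hypothesis lprincipalR : left_principal R.

Lemma left_principal_chain_stationary (K : nat -> R -> Prop) :
  (forall n, is_left_ideal (K n)) -> (forall n x, K n x -> K n.+1 x) ->
  exists N, forall m x, K m x -> K N x.
Proof.
move=> K_left K_mono.
have K_le n m x : (n <= m)%N -> K n x -> K m x.
  move=> /subnK <-; elim: (m - n)%N => [//|d IHd] Knx.
  by rewrite addSn; apply: K_mono; apply: IHd.
pose U x := exists n, K n x.
have U_left : is_left_ideal U.
  split=> [|x y [n Knx] [m Kmy]|r x [n Knx]].
  - by exists 0%N; case: (K_left 0%N).
  - exists (maxn n m); case: (K_left (maxn n m)) => _ K_add _.
    by apply: K_add; [apply: K_le Knx; apply: leq_maxl | apply: K_le Kmy; apply: leq_maxr].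
  - by exists n; case: (K_left n) => _ _ K_mul; apply: K_mul.
have [g U_g] := lprincipalR U_left.
have [N KNg] := (U_g g).2 (lprinc_id g).
exists N => m x Kmx; have [r ->] := (U_g x).1 (ex_intro _ m Kmx).
by case: (K_left N) => _ _ K_mul; apply: K_mul.
Qed.

Lemma invariant_annihilator_stationary (a rho : R) : invariant rho ->
  exists N, forall m r, lprinc a (rho ^+ m * r) -> lprinc a (rho ^+ N * r).
Proof.
move=> rho_inv.
apply: (left_principal_chain_stationary (K := fun n r => lprinc a (rho ^+ n * r))).
- move=> n; split=> [|x y ax ay|s x ax]; first by rewrite mulr0; apply: lprinc0.
    by rewrite mulrDr; apply: lprincD.
  have [s' eq_s'] := (invariantX n rho_inv (rho ^+ n * s)).2 (rprinc_mul _ s).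
  by rewrite mulrA eq_s' -mulrA; apply: lprincMl.
- by move=> n r ar; rewrite exprS -mulrA; apply: lprincMl.
Qed.

End LeftPrincipalRing.

Section CompletelyPrime.
Variable R : unitRingType.

Definition lprinc_nonprime_pair (a x y : R) : Prop :=
  [/\ ~ lprinc a x, ~ lprinc a y, lprinc a (x * y) & lprinc a (a * y)].

Lemma nonprime_pair_not_completely_prime (a x y : R) :
  lprinc_nonprime_pair a x y -> ~ completely_prime (lprinc a).
Proof.
move=> [ax ay axy aay] [_ cp_a].
suff a_stable : forall z, lprinc a z -> lprinc a (z * y) by case: (cp_a x y axy a_stable).
by move=> z [r ->]; rewrite -mulrA; apply: lprincMl.
Qed.

Lemma maximal_completely_prime (P : R -> Prop) : maximal_left_ideal P -> completely_prime P.
Proof.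
move=> [[P0 P_add P_mul] P_proper P_max]; split=> // x y Pxy Py_stable.
have [Py|notPy] := classic (P y); [by right | left].
pose Q z := P (z * y).
have Q_left : is_left_ideal Q.
  split=> [|u v Qu Qv|r u Qu]; rewrite /Q.
  - by rewrite mul0r.
  - by rewrite mulrDl; apply: P_add.
  - by rewrite -mulrA; apply: P_mul.
case: (P_max Q Q_left Py_stable) => [Q_P|Q_all]; first exact: (Q_P x).1.
by case: notPy; have := Q_all 1; rewrite /Q mul1r.
Qed.

Lemma irreducible_c_irreducible (a : R) : irreducible_elt a -> c_irreducible a.
Proof.
move=> [_ a_irr] [_ [b [b' [_ [_ [[b_nonunit b'_nonunit _ _] eq_a _ _]]]]]].
by case: (a_irr b b' eq_a) => unit; [move: b_nonunit | move: b'_nonunit]; rewrite unit.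
Qed.

End CompletelyPrime.

Section CReducible.
Variable R : unitRingType.
Hypotheses (domR : is_domain R) (lprincipalR : left_principal R).

(* With R y + R a = R d, d = u0 y + v0 a and {w | w y \in R a} = R k, right
   multiplication by u0 induces R/R d' = R d/R a = R/R k; R y + R a is proper because
   it lies in R c. *)
Lemma c_reducible_of_nonprime_pair (a c x y : R) :
  a <> 0 -> lprinc_nonprime_pair a x y -> lprinc c y -> lprinc c a ->
  c \isn't a GRing.unit -> c_reducible a.
Proof.
move=> a_neq0 [ax ay axy aay] cy ca /negP c_nonunit.
pose I1 w := lprinc a (w * y).
pose I2 w := exists u v, w = u * y + v * a.
have I1_left : is_left_ideal I1.
  split=> [|u v au av|r u au]; rewrite /I1.
  - by rewrite mul0r; apply: lprinc0.
  - by rewrite mulrDl; apply: lprincD.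
  - by rewrite -mulrA; apply: lprincMl.
have I2_left : is_left_ideal I2.
  split=> [|w1 w2 [u1 [v1 ->]] [u2 [v2 ->]]|r w [u [v ->]]].
  - by exists 0, 0; rewrite !mul0r addr0.
  - by exists (u1 + u2), (v1 + v2); rewrite !mulrDl addrACA.
  - by exists (r * u), (r * v); rewrite mulrDr !mulrA.
have [k I1_k] := lprincipalR I1_left.
have [d I2_d] := lprincipalR I2_left.
have [k' eq_ak] := (I1_k a).1 aay.
have [d' eq_ad] : lprinc d a by apply/I2_d; exists 0, 1; rewrite mul0r add0r mul1r.
have [u0 [v0 eq_d]] := (I2_d d).2 (lprinc_id d).
have d_neq0 : d <> 0 by move=> d0; apply: a_neq0; rewrite eq_ad d0 mulr0.
have eq_td t : t * d = t * u0 * y + t * v0 * a by rewrite eq_d mulrDr !mulrA.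
have phi_congr t : lprinc k (t * u0) <-> lprinc d' t.
  have a_td : lprinc a (t * d) <-> lprinc a (t * u0 * y).
    rewrite eq_td; split=> [atd|atu0y]; last by apply: lprincD atu0y (lprinc_mul _ _).
    by rewrite -(addrK (t * v0 * a) (t * u0 * y)); apply: lprincB atd (lprinc_mul _ _).
  have a_d' : lprinc a (t * d) <-> lprinc d' t.
    split=> [[m eq_m]|[m ->]]; last by rewrite -mulrA -eq_ad; apply: lprinc_mul.
    by exists m; apply: (domain_mulIf domR d_neq0); rewrite eq_m eq_ad mulrA.
  exact: iff_trans (iff_sym (I1_k _)) (iff_trans (iff_sym a_td) a_d').
split=> //; exists d', d, k', k; split=> //.
  split; apply/negP.
  - move=> d'_unit; apply: ay; apply: (lprinc_unit_factor eq_ad d'_unit).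
    by apply/I2_d; exists 1, 0; rewrite mul1r mul0r addr0.
  - move=> /(lprinc_unit 1) /I2_d [u [v eq_1]]; apply: c_nonunit.
    by apply: (lprinc_1_unit domR); rewrite eq_1; apply: lprincD; apply: lprincMl.
  - by move=> k'_unit; apply: ax; apply: (lprinc_unit_factor eq_ak k'_unit); apply/I1_k.
  - by move=> /(lprinc_unit 1) /I1_k; rewrite /I1 mul1r.
exists (fun r => r * u0); split.
- by move=> r s /phi_congr; rewrite /= mulrBl.
- by move=> r s /=; rewrite mulrDl subrr; apply: lprinc0.
- by move=> r s /=; rewrite mulrA subrr; apply: lprinc0.
- by move=> r s; rewrite /= -mulrBl => /phi_congr.
- move=> w; have [s eq_s] : lprinc d (w * y) by apply/I2_d; exists w, 0; rewrite mul0r addr0.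
  exists s; apply/I1_k; rewrite /I1 /= mulrBl eq_s eq_td addrAC subrr add0r.
  exact: lprinc_mul.
Qed.

End CReducible.

Definition lbound_add_lprinc (R : unitRingType) (b c : R) : R -> Prop :=
  fun w => exists p z, lbound b p /\ w = p + z * c.

Lemma lbound_add_lprinc_left_ideal (R : unitRingType) (b c : R) :
  is_left_ideal (lbound_add_lprinc b c).
Proof.
have [[_ b_add b_mul] _] := lbound_twosided b.
split=> [|x y [p [z [bp ->]]] [p' [z' [bp' ->]]]|r x [p [z [bp ->]]]].
- by exists 0, 0; rewrite mul0r addr0; split=> //; apply: lbound0.
- by exists (p + p'), (z + z'); rewrite mulrDl addrACA; split=> //; apply: b_add.
- by exists (r * p), (r * z); rewrite mulrDr mulrA; split=> //; apply: b_mul.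
Qed.

Section BoundedFactor.
Variables (R : unitRingType) (a b c rho : R).
Hypotheses (domR : is_domain R) (lprincipalR : left_principal R).
Hypotheses (eq_abc : a = b * c) (a_neq0 : a <> 0).
Hypotheses (b_nonunit : b \isn't a GRing.unit) (c_nonunit : c \isn't a GRing.unit).
Hypotheses (rho_neq0 : rho <> 0) (rho_invariant : invariant rho).
Hypothesis rho_lbound : forall r, lbound b r <-> rprinc rho r.

Let c_neq0 : c <> 0.
Proof. by move=> c0; apply: a_neq0; rewrite eq_abc c0 mulr0. Qed.

Let c_notin_Ra : ~ lprinc a c.
Proof. exact: (right_factor_notin_lprinc domR eq_abc b_nonunit c_neq0). Qed.

Section Comaximal.
Hypothesis comaximal : lbound_add_lprinc b c 1.

Lemma comaximal_exp n : exists u z, 1 = rho ^+ n * u + z * c.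
Proof.
have [p [z1 [bp eq_1]]] := comaximal; have [u0 eq_p] := (rho_lbound p).1 bp.
elim: n => [|n [u [z eq_1n]]]; first by exists 1, 0; rewrite expr0 mul1r mul0r addr0.
have [u' eq_u'] := (rho_invariant (u * rho)).1 (lprinc_mul _ u).
exists (u' * u0), (rho ^+ n * u * z1 + z).
rewrite {1}eq_1n mulrDl addrA; congr (_ + _).
by rewrite -[LHS]mulr1 {1}eq_1 eq_p mulrDr !mulrA -(mulrA _ u rho) eq_u' exprSr !mulrA.
Qed.

Lemma comaximal_nonprime_pair : exists x y, lprinc_nonprime_pair a x y /\ lprinc c y.
Proof.
have [N stationary] := invariant_annihilator_stationary lprincipalR a rho_invariant.
have rho_c w : lprinc c w -> lprinc a (rho * w).
  move=> [z ->]; have [t eq_t] := lbound_lprinc ((rho_lbound (rho * z)).2 (rprinc_mul _ z)).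
  by rewrite mulrA eq_t -mulrA -eq_abc; apply: lprinc_mul.
(* R c is sent into R a by rho, so by stationarity R c meets rho^N R + R a inside R a. *)
have lprinc_a_of_c w : lprinc c w -> (exists r v, w = rho ^+ N * r + v * a) -> lprinc a w.
  move=> cw [r [v eq_w]].
  have aNw : lprinc a (rho ^+ N * w) by apply: (stationary 1%N); rewrite expr1; apply: rho_c.
  have aNr : lprinc a (rho ^+ N * r).
    apply: (stationary (N + N)%N); rewrite exprD -mulrA.
    have -> : rho ^+ N * r = w - v * a by rewrite eq_w addrK.
    by rewrite mulrBr mulrA; apply: lprincB aNw (lprinc_mul _ _).
  by rewrite eq_w; apply: lprincD aNr (lprinc_mul _ _).
have [u [z eq_1]] := comaximal_exp N.
have eq_zc : z * c = 1 - rho ^+ N * u by rewrite eq_1 addrAC subrr add0r.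
have [u' eq_u'] := (invariantX N rho_invariant (rho ^+ N * u)).2 (rprinc_mul _ u).
have [a' eq_a'] := (invariantX N rho_invariant (a * rho ^+ N)).1 (lprinc_mul _ a).
have [c' eq_c'] := (invariantX N rho_invariant (c * rho ^+ N)).1 (lprinc_mul _ c).
exists (rho ^+ N), (z * c); split; last exact: lprinc_mul.
split.
- move=> [t eq_t]; move/negP: c_nonunit; apply.
  apply: (@domain_linv_unit _ domR (u' * t * b + z)).
  by rewrite [RHS]eq_1 eq_u' eq_t eq_abc mulrDl !mulrA.
- move=> [t eq_t]; apply: c_notin_Ra; apply: lprinc_a_of_c; first exact: lprinc_id.
  exists (c' * u), (c * t).
  by rewrite mulrA -eq_c' -(mulrA c t a) -eq_t -mulrA -mulrDr -eq_1 mulr1.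
- apply: lprinc_a_of_c; first by exists (rho ^+ N * z); rewrite mulrA.
  by exists (1 - rho ^+ N * u), 0; rewrite eq_zc mul0r addr0.
- apply: lprinc_a_of_c; first by exists (a * z); rewrite mulrA.
  exists (- (a' * u)), 1.
  by rewrite eq_zc mulrBr mulr1 mul1r mulrN [RHS]addrC (mulrA a) eq_a' -mulrA.
Qed.

End Comaximal.

Lemma not_comaximal_nonprime_pair :
  ~ lbound_add_lprinc b c 1 -> exists x y, lprinc_nonprime_pair a x y /\ lprinc c y.
Proof.
move=> not_comaximal.
have [q Q_q] := lprincipalR (lbound_add_lprinc_left_ideal b c).
have b_rho : lbound b rho by apply/rho_lbound; apply: rprinc_id.
have [k eq_rho] : lprinc q rho by apply/Q_q; exists rho, 0; rewrite mul0r addr0.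
have [k' eq_k] := (rho_lbound (k * rho)).1 (lboundMl k b_rho).
have k_neq0 : k <> 0 by move=> k0; apply: rho_neq0; rewrite eq_rho k0 mul0r.
have eq_qk' : q * k' = rho.
  by apply: (domain_mulfI domR k_neq0); rewrite mulrA -eq_rho -eq_k.
have [u k'u_notin] : exists u, ~ lprinc b (k' * u).
  apply: NNPP => all_in; apply: not_comaximal.
  have b_k' : lbound b k' by move=> u; apply: NNPP => ?; apply: all_in; exists u.
  have [z eq_k'] := (rho_invariant k').2 ((rho_lbound k').1 b_k').
  have qz1 : q * z = 1.
    by apply: (domain_mulIf domR rho_neq0); rewrite mul1r -mulrA -eq_k' eq_qk'.
  by apply/Q_q; exists z; rewrite (domain_mulr1C domR qz1).
have [t eq_t] : lprinc b (q * (k' * u)).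
  by rewrite mulrA eq_qk'; apply: lbound_lprinc; apply/rho_lbound; apply: rprinc_mul.
have eq_qy : q * (k' * u * c) = t * a by rewrite mulrA eq_t -mulrA -eq_abc.
exists q, (k' * u * c); split; last exact: lprinc_mul.
split.
- move=> [m eq_q]; have [n eq_c] : lprinc q c.
    by apply/Q_q; exists 0, 1; rewrite add0r mul1r; split=> //; apply: lbound0.
  by apply: c_notin_Ra; exists (n * m); rewrite eq_c eq_q mulrA.
- move=> [m eq_m]; apply: k'u_notin; exists m; apply: (domain_mulIf domR c_neq0).
  by rewrite eq_m -mulrA -eq_abc.
- by rewrite eq_qy; apply: lprinc_mul.
- have [w eq_a] : lprinc q a.
    by apply/Q_q; exists 0, b; rewrite add0r; split=> //; apply: lbound0.
  by exists (w * t); rewrite -(mulrA w t) -eq_qy (mulrA w q) -eq_a.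
Qed.

End BoundedFactor.

Section BoundedPID.
Variable R : unitRingType.
Hypotheses (PID_R : is_PID R) (bounded_R : bounded_ring R).

Lemma bounded_factor_nonprime_pair (a b c : R) :
  a <> 0 -> a = b * c -> b \isn't a GRing.unit -> c \isn't a GRing.unit ->
  exists x y, lprinc_nonprime_pair a x y /\ lprinc c y.
Proof.
move=> a_neq0 eq_abc b_nonunit c_nonunit; have [domR lprincipalR _] := PID_R.
have b_neq0 : b <> 0 by move=> b0; apply: a_neq0; rewrite eq_abc b0 mul0r.
have [rho [rho_neq0 rho_inv rho_lbound]] :=
  lbound_invariant_generator PID_R (bounded_R b_neq0 b_nonunit).
have [comaximal|not_comaximal] := classic (lbound_add_lprinc b c 1).
- exact: (comaximal_nonprime_pair domR lprincipalR eq_abc a_neq0 b_nonunit c_nonunit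
            rho_inv rho_lbound comaximal).
- exact: (not_comaximal_nonprime_pair domR lprincipalR eq_abc a_neq0 b_nonunit
            rho_neq0 rho_inv rho_lbound not_comaximal).
Qed.

Lemma c_irreducible_irreducible (a : R) :
  a <> 0 -> a \isn't a GRing.unit -> c_irreducible a -> irreducible_elt a.
Proof.
move=> a_neq0 a_nonunit a_cirr; split=> // b c eq_abc.
apply: NNPP => /not_or_and [/negP b_nonunit /negP c_nonunit].
have [domR lprincipalR _] := PID_R.
have [x [y [pair_xy c_y]]] := bounded_factor_nonprime_pair a_neq0 eq_abc b_nonunit c_nonunit.
apply: a_cirr; apply: (c_reducible_of_nonprime_pair domR lprincipalR a_neq0 pair_xy c_y) => //.
by exists b.
Qed.

Lemma completely_prime_lprinc_maximal (a : R) :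
  a <> 0 -> completely_prime (lprinc a) -> maximal_left_ideal (lprinc a).
Proof.
move=> a_neq0 cp_a; have [[x0 a_x0] _] := cp_a.
split=> [||J J_left Ra_J]; [exact: lprinc_left_ideal | by exists x0 |].
have [j J_j] := PID_left_principal PID_R J_left.
have [t eq_a] := (J_j a).1 (Ra_J a (lprinc_id a)).
have [t_unit|t_nonunit] := boolP (t \is a GRing.unit).
  by left=> w; split=> [/J_j|]; [apply: lprinc_unit_factor eq_a t_unit | apply: Ra_J].
have [j_unit|j_nonunit] := boolP (j \is a GRing.unit).
  by right=> w; apply/J_j; apply: lprinc_unit.
have [x [y [pair_xy _]]] := bounded_factor_nonprime_pair a_neq0 eq_a t_nonunit j_nonunit.
by case: (nonprime_pair_not_completely_prime pair_xy).
Qed.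

End BoundedPID.

Theorem corollary3p8 (R : unitRingType) :
  is_PID R -> bounded_ring R ->
  (forall a : R, a <> 0 -> a \isn't a GRing.unit ->
     (c_irreducible a <-> irreducible_elt a)) /\
  (forall P : R -> Prop, is_left_ideal P -> (exists x, P x /\ x <> 0) ->
     (completely_prime P <-> maximal_left_ideal P)).
Proof.
move=> PID_R bounded_R; split=> [a a_neq0 a_nonunit | P P_left [x0 [Px0 x0_neq0]]].
  split; first exact: c_irreducible_irreducible.
  exact: irreducible_c_irreducible.
have [a P_a] := PID_left_principal PID_R P_left.
have a_neq0 : a <> 0.
  by move=> a0; apply: x0_neq0; have [r ->] := (P_a x0).1 Px0; rewrite a0 mulr0.
have -> : P = lprinc a.
  by apply: functional_extensionality => x; apply: propositional_extensionality.
split; first exact: completely_prime_lprinc_maximal.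
exact: maximal_completely_prime.
Qed.
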